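(* Let $\lambda>0$ with $\lambda\neq 1$ and $\mu=1/\lambda$, and let $A\in M_3\otimes M_3$ be the $9\times 9$ matrix (written as a $3\times 3$ block matrix with $3\times 3$ blocks) $$A=\left(\begin{array}{ccc|ccc|ccc} 1&0&0&0&1&0&0&0&1\\ 0&\lambda^2&0&1&0&0&0&0&0\\ 0&0&\mu^2&0&0&0&1&0&0\\ \hline 0&1&0&\mu^2&0&0&0&0&0\\ 1&0&0&0&1&0&0&0&1\\ 0&0&0&0&0&\lambda^2&0&1&0\\ \hline 0&0&1&0&0&0&\lambda^2&0&0\\ 0&0&0&0&0&1&0&\mu^2&0\\ 1&0&0&0&1&0&0&0&1 \end{array}\right).$$ Then $A\in\mathbb{T}\setminus\mathbb{V}_1$ (i.e. $A$ is, up to normalization, an entangled state with positive partial transpose), and $A$ generates an extreme ray of the cone $\mathbb{T}$: whenever $A=B+C$ with $B,C\in\mathbb{T}$, both $B$ and $C$ are nonnegative scalar multiples of $A$.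
   Context: Identify $M_3\otimes M_3$ with $3\times 3$ block matrices $A=\sum_{i,j=1}^3 a_{ij}\otimes e_{ij}$ with blocks $a_{ij}\in M_3$; the partial transpose is $A^\tau=\sum_{i,j}a_{ji}\otimes e_{ij}$. $\mathbb{T}$ is the cone of $A\in M_3\otimes M_3$ such that both $A$ and $A^\tau$ are positive semi-definite. For $z\in M_3$ with rows $z_1,z_2,z_3\in\mathbb C^3$ (as column vectors), $\tilde z\tilde z^*$ denotes the block matrix whose $(i,j)$ block is $z_iz_j^*$; $\mathbb{V}_1$ is the convex cone generated by $\{\tilde z\tilde z^*:\operatorname{rank} z\le 1\}$. *)

(* Complex scalars: an arbitrary numClosedFieldType C
   (e.g. algC, or complex R over a real closed field). *)
From mathcomp Require Import all_boot all_order all_algebra.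
Set Implicit Arguments. Unset Strict Implicit. Unset Printing Implicit Defensive.
Import Order.TTheory GRing.Theory Num.Theory Num.Def.
Local Open Scope ring_scope.

Section Defs.
Variable C : numClosedFieldType.

Definition adjmx m n (M : 'M[C]_(m, n)) : 'M[C]_(n, m) := (map_mx conjC M)^T.

Definition psdmx n (M : 'M[C]_n) : Prop :=
  adjmx M = M /\ forall v : 'cV[C]_n, 0 <= (adjmx v *m M *m v) 0 0.

(* M_3 (x) M_3 is 'M_9; index (i,k) with block i and inner index k is 3*i+k *)
Definition idx (i k : 'I_3) : 'I_9 := inord (3 * i + k).
Definition blk (p : 'I_9) : 'I_3 := inord (p %/ 3).
Definition inn (p : 'I_9) : 'I_3 := inord (p %% 3).

(* partial transpose: (i,j) block of A^tau is the (j,i) block of A *)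
Definition ptrans (A : 'M[C]_9) : 'M[C]_9 :=
  \matrix_(p, q) A (idx (blk q) (inn p)) (idx (blk p) (inn q)).

Definition inT (A : 'M[C]_9) : Prop := psdmx A /\ psdmx (ptrans A).

Definition ztilde (z : 'M[C]_3) : 'cV[C]_9 := \col_p z (blk p) (inn p).

Definition zzstar (z : 'M[C]_3) : 'M[C]_9 := ztilde z *m adjmx (ztilde z).

Definition inV1 (A : 'M[C]_9) : Prop :=
  exists (N : nat) (c : 'I_N -> C) (z : 'I_N -> 'M[C]_3),
    (forall t, 0 <= c t) /\ (forall t, (\rank (z t) <= 1)%N) /\
    A = \sum_(t < N) c t *: zzstar (z t).

(* entries of the matrix A of the theorem (0-based indices), mu = 1/lam *)
Definition Aent (lam : C) (i j : nat) : C :=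
  let mu := lam^-1 in
  match i, j with
  | 0, 0 | 0, 4 | 0, 8 | 4, 0 | 4, 4 | 4, 8 | 8, 0 | 8, 4 | 8, 8 => 1
  | 1, 3 | 3, 1 | 2, 6 | 6, 2 | 5, 7 | 7, 5 => 1
  | 1, 1 | 5, 5 | 6, 6 => lam ^+ 2
  | 2, 2 | 3, 3 | 7, 7 => mu ^+ 2
  | _, _ => 0
  end.

Definition Amat (lam : C) : 'M[C]_9 := \matrix_(i, j) Aent lam i j.

End Defs.

From mathcomp Require Import all_boot all_order all_algebra.
From mathcomp Require Import ring.
Import Order.TTheory GRing.Theory Num.Theory.
Set Implicit Arguments. Unset Strict Implicit. Unset Printing Implicit Defensive.
Local Open Scope ring_scope.

(* A = U U^* is positive semidefinite and equal to its partial transpose, and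
   its kernel is spanned by five explicit vectors k_j.  If A = B + D
   in T, positivity gives ker A <= ker B and ker A <= ker B^tau.  The first
   inclusion confines B to the four-dimensional range of A, i.e. B is
   determined by its 4 x 4 block on the indices 0, 3, 2, 7; the second one
   pins the diagonal of that block to the one of A and, through Hermitian
   symmetry, sends each off-diagonal entry x to L^3 x with L = lam^2, so it
   vanishes because lam^6 <> 1.  For separability, a decomposition
   A = sum c_t z~_t z~_t^* would make every z~_t orthogonal to the k_j, and
   together with the vanishing 2 x 2 minors of a rank-one z this forces z = 0. *)

Section PositiveSemidefinite.
Variable C : numClosedFieldType.

Lemma adjmxE m n (M : 'M[C]_(m, n)) i j : adjmx M i j = (M j i)^*.
Proof. by rewrite !mxE. Qed.

Lemma adjmxK m n (M : 'M[C]_(m, n)) : adjmx (adjmx M) = M.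
Proof. by apply/matrixP=> i j; rewrite !adjmxE conjCK. Qed.

Lemma adjmxM m n p (A : 'M[C]_(m, n)) (B : 'M[C]_(n, p)) :
  adjmx (A *m B) = adjmx B *m adjmx A.
Proof. by rewrite /adjmx map_mxM trmx_mul. Qed.

Lemma adjmxB m n (A B : 'M[C]_(m, n)) : adjmx (A - B) = adjmx A - adjmx B.
Proof. by rewrite /adjmx map_mxB linearB. Qed.

Lemma adjmxZ m n (a : C) (A : 'M[C]_(m, n)) : adjmx (a *: A) = a^* *: adjmx A.
Proof. by apply/matrixP=> i j; rewrite !mxE rmorphM. Qed.

Lemma hermitian_entry n (M : 'M[C]_n) p q : adjmx M = M -> M q p = (M p q)^*.
Proof. by move/matrixP/(_ q p) <-; rewrite adjmxE. Qed.

Definition qform n (M : 'M[C]_n) (v : 'cV[C]_n) : C := (adjmx v *m M *m v) 0 0.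

Lemma cnorm2E n (w : 'cV[C]_n) : (adjmx w *m w) 0 0 = \sum_i (w i 0)^* * w i 0.
Proof. by rewrite mxE; apply: eq_bigr => i _; rewrite adjmxE. Qed.

Lemma cnorm2_ge0 n (w : 'cV[C]_n) : 0 <= (adjmx w *m w) 0 0.
Proof. by rewrite cnorm2E sumr_ge0 // => i _; rewrite mulrC mul_conjC_ge0. Qed.

Lemma cnorm2_eq0 n (w : 'cV[C]_n) : (adjmx w *m w) 0 0 = 0 -> w = 0.
Proof.
rewrite cnorm2E => /psumr_eq0P w0; apply/matrixP=> i j; rewrite (ord1 j) mxE.
apply/eqP; rewrite -mul_conjC_eq0 mulrC w0 // => k _.
by rewrite mulrC mul_conjC_ge0.
Qed.

Lemma qformD n (M N : 'M[C]_n) v : qform (M + N) v = qform M v + qform N v.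
Proof. by rewrite /qform mulmxDr mulmxDl mxE. Qed.

Lemma qform_sum n N (c : 'I_N -> C) (M : 'I_N -> 'M[C]_n) v :
  qform (\sum_(t < N) c t *: M t) v = \sum_(t < N) c t * qform (M t) v.
Proof.
rewrite /qform mulmx_sumr mulmx_suml summxE; apply: eq_bigr => t _.
by rewrite -scalemxAr -scalemxAl mxE.
Qed.

Lemma qform_ker n (M : 'M[C]_n) v : M *m v = 0 -> qform M v = 0.
Proof. by move=> Mv0; rewrite /qform -mulmxA Mv0 mulmx0 mxE. Qed.

Lemma qform_gram m n (V : 'M[C]_(m, n)) v :
  qform (V *m adjmx V) v = (adjmx (adjmx V *m v) *m (adjmx V *m v)) 0 0.
Proof. by rewrite /qform adjmxM adjmxK !mulmxA. Qed.

Lemma qform_rank1_eq0 n (u v : 'cV[C]_n) :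
  qform (u *m adjmx u) v = 0 -> (adjmx v *m u) 0 0 = 0.
Proof.
rewrite qform_gram => /cnorm2_eq0 uv0.
by rewrite -[u]adjmxK -adjmxM uv0 adjmxE mxE conjC0.
Qed.

Lemma psd_gram m n (V : 'M[C]_(m, n)) : psdmx (V *m adjmx V).
Proof.
split=> [|v]; first by rewrite adjmxM adjmxK.
by rewrite -/(qform _ v) qform_gram cnorm2_ge0.
Qed.

(* With w := M v, a := |w|^2 and s := w^* M w, testing positivity on
   (s + 1) v - a w gives -a^2 (s + 2) >= 0, hence w = 0. *)
Lemma psd_qform_eq0 n (M : 'M[C]_n) v : psdmx M -> qform M v = 0 -> M *m v = 0.
Proof.
case=> Mherm Mpos qMv0; set w := M *m v.
set a : C := (adjmx w *m w) 0 0; set s := qform M w.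
have a_ge0 : 0 <= a := cnorm2_ge0 w.
have s_ge0 : 0 <= s := Mpos w.
have conj_s1 : (s + 1)^* = s + 1 by apply: conj_Creal; rewrite realD ?ger0_real.
have conj_a : a^* = a by apply: conj_Creal; rewrite ger0_real.
have vM : adjmx v *m M = adjmx w by rewrite /w adjmxM Mherm.
have wv0 : (adjmx w *m v) 0 0 = 0 by rewrite -vM.
have := Mpos ((s + 1) *: v - a *: w).
rewrite adjmxB !adjmxZ conj_s1 conj_a !mulmxBl !mulmxBr -!scalemxAl -!scalemxAr.
rewrite vM -[adjmx w *m M *m v]mulmxA -/w.
have entryB (X Y : 'M[C]_1) : (X - Y) 0 0 = X 0 0 - Y 0 0 by rewrite !mxE.
have entryZ c (X : 'M[C]_1) : (c *: X) 0 0 = c * X 0 0 by rewrite !mxE.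
rewrite !entryB !entryZ -/(qform M w) -/a -/s wv0 => pos.
have : a ^+ 2 * (s + 2) <= 0 by rewrite -oppr_ge0; move: pos; congr (0 <= _); ring.
rewrite pmulr_lle0 ?ltr_wpDl ?ltr0n // => a2_le0.
apply: cnorm2_eq0; apply/eqP; rewrite -[a == 0](expf_eq0 _ 2).
by rewrite eq_le a2_le0 exprn_ge0.
Qed.

Lemma psd_diag_ge0 n (M : 'M[C]_n) i : psdmx M -> 0 <= M i i.
Proof.
case=> _ /(_ (delta_mx i 0)).
have -> : adjmx (delta_mx i 0 : 'cV[C]_n) = delta_mx 0 i.
  by apply/matrixP => k l; rewrite adjmxE !mxE conjC_nat andbC.
by rewrite -rowE -colE !mxE.
Qed.

Lemma psd_kerDl n (B D : 'M[C]_n) (v : 'cV[C]_n) :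
  psdmx B -> psdmx D -> (B + D) *m v = 0 -> B *m v = 0.
Proof.
move=> psdB psdD /qform_ker; rewrite qformD => /eqP.
rewrite paddr_eq0; [|exact: psdB.2|exact: psdD.2] => /andP[/eqP qBv0 _].
exact: psd_qform_eq0.
Qed.

Lemma rank_le1_minor m n (z : 'M[C]_(m, n)) i j k l :
  (\rank z <= 1)%N -> z i j * z k l = z i l * z k j.
Proof.
move=> rk_z; rewrite -(mulmx_base z); move: (col_base z) (row_base z) rk_z.
case: (\rank z) => [|[|r]] X Y // _; first by rewrite !mxE !big_ord0 !mul0r.
by rewrite !mxE !big_ord1; ring.
Qed.

End PositiveSemidefinite.

Section NineIndices.

Lemma ord_inordP n (P : 'I_n.+1 -> Prop) :
  (forall k, (k < n.+1)%N -> P (inord k)) -> forall p, P p.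
Proof. by move=> Pk p; rewrite -(inord_val p); apply: Pk. Qed.

Lemma big_ord_inord (R : nmodType) n (F : 'I_n.+1 -> R) :
  \sum_i F i = \sum_(0 <= k < n.+1) F (inord k).
Proof. by rewrite big_mkord; apply: eq_bigr => i _; rewrite inord_val. Qed.

Lemma sum_ord4 (R : nmodType) (F : 'I_4 -> R) : \sum_q F q =
  F (inord 0) + (F (inord 1) + (F (inord 2) + F (inord 3))).
Proof. by rewrite big_ord_inord !big_nat_recl // big_geq // addr0. Qed.

Lemma sum_ord9 (R : nmodType) (F : 'I_9 -> R) : \sum_q F q =
  F (inord 0) + (F (inord 1) + (F (inord 2) + (F (inord 3) + (F (inord 4) +
  (F (inord 5) + (F (inord 6) + (F (inord 7) + F (inord 8)))))))).
Proof. by rewrite big_ord_inord !big_nat_recl // big_geq // addr0. Qed.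

Definition blkn (p : nat) : nat :=
  match p with 0 | 1 | 2 => 0 | 3 | 4 | 5 => 1 | _ => 2 end.
Definition innn (p : nat) : nat :=
  match p with 0 | 3 | 6 => 0 | 1 | 4 | 7 => 1 | _ => 2 end.
Definition idxn (i k : nat) : nat :=
  match i with 0 => k | 1 => k.+3 | _ => k.+3.+3 end.

Lemma blkn_lt3 p : (blkn p < 3)%N.
Proof. by case: p => [|[|[|[|[|[|p]]]]]]. Qed.

Lemma innn_lt3 p : (innn p < 3)%N.
Proof. by case: p => [|[|[|[|[|[|[|[|[|p]]]]]]]]]. Qed.

Lemma blk_inord p : (p < 9)%N -> blk (inord p : 'I_9) = inord (blkn p).
Proof.
by case: p => [|[|[|[|[|[|[|[|[|p]]]]]]]]] // _; apply/val_inj; rewrite /blk /= !inordK.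
Qed.

Lemma inn_inord p : (p < 9)%N -> inn (inord p : 'I_9) = inord (innn p).
Proof.
by case: p => [|[|[|[|[|[|[|[|[|p]]]]]]]]] // _; apply/val_inj; rewrite /inn /= !inordK.
Qed.

Lemma idx_inord i k : (i < 3)%N -> (k < 3)%N ->
  idx (inord i) (inord k) = inord (idxn i k).
Proof.
case: i => [|[|[|i]]] // _; case: k => [|[|[|k]]] // _.
all: by apply/val_inj; rewrite /idx /= !inordK.
Qed.

(* Entries addressed by natural numbers; out-of-range indices are junk
   ([inord] sends them to 0), hence the bounds in the lemmas below. *)
Definition ent (R : Type) m n (M : 'M[R]_(m.+1, n.+1)) (i j : nat) : R :=
  M (inord i) (inord j).

Variable C : numClosedFieldType.

Lemma ptransE (M : 'M[C]_9) p q : (p < 9)%N -> (q < 9)%N ->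
  ent (ptrans M) p q = ent M (idxn (blkn q) (innn p)) (idxn (blkn p) (innn q)).
Proof.
move=> p9 q9; rewrite /ent mxE !blk_inord // !inn_inord //.
by rewrite !idx_inord ?blkn_lt3 ?innn_lt3.
Qed.

Lemma ptransD (M N : 'M[C]_9) : ptrans (M + N) = ptrans M + ptrans N.
Proof. by apply/matrixP => p q; rewrite !mxE. Qed.

Lemma ztilde_inord (z : 'M[C]_3) p : (p < 9)%N ->
  ztilde z (inord p) 0 = z (inord (blkn p)) (inord (innn p)).
Proof. by move=> p9; rewrite mxE blk_inord // inn_inord. Qed.

End NineIndices.

Section AmatLambda.
Variable C : numClosedFieldType.
Variable lam : C.
Hypothesis lam_real : lam \is Num.real.
Hypothesis lam_gt0 : 0 < lam.
Hypothesis lam_neq1 : lam != 1.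

Let L := lam ^+ 2.

Lemma lam_neq0 : lam != 0. Proof. by rewrite gt_eqF. Qed.
Lemma conj_lam : lam^* = lam. Proof. exact: conj_Creal. Qed.
Lemma conj_lamV : lam^-1^* = lam^-1. Proof. by rewrite fmorphV /= conj_lam. Qed.
Lemma conj_L : L^* = L. Proof. by rewrite /L rmorphXn /= conj_lam. Qed.

(* The only use of lam != 1. *)
Lemma L3_fixed_eq0 x : x = L ^+ 3 * x -> x = 0.
Proof.
have L3_neq1 : L ^+ 3 != 1 by rewrite /L -exprM pexpr_eq1 // ltW.
move=> x_fixed; apply/eqP; have : (1 - L ^+ 3) * x == 0.
  by rewrite mulrBl mul1r -x_fixed subrr.
by rewrite mulf_eq0 subr_eq0 eq_sym (negPf L3_neq1).
Qed.

Definition kerAent (j p : nat) : C :=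
  match j, p with
  | 0, 0 => 1 | 0, 4 => -1
  | 1, 4 => 1 | 1, 8 => -1
  | 2, 1 => 1 | 2, 3 => - L
  | 3, 2 => - L | 3, 6 => 1
  | 4, 5 => 1 | 4, 7 => - L
  | _, _ => 0
  end.

Definition kerA (j : nat) : 'cV[C]_9 := \col_p kerAent j p.

Lemma Amat_kerA j : (j < 5)%N -> Amat lam *m kerA j = 0.
Proof.
move=> j5; apply/matrixP => p k; rewrite (ord1 k) {k}; move: p.
apply: ord_inordP => p p9; rewrite !mxE sum_ord9 !mxE !inordK //.
have lam0 := lam_neq0.
case: j j5 => [|[|[|[|[|j]]]]] // _;
 case: p p9 => [|[|[|[|[|[|[|[|[|p]]]]]]]]] // _; rewrite /= /L; first [done | by field].
Qed.

Lemma Amat_ent i j : (i < 9)%N -> (j < 9)%N -> ent (Amat lam) i j = Aent lam i j.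
Proof. by move=> i9 j9; rewrite /ent mxE !inordK. Qed.

Lemma ptrans_Amat : ptrans (Amat lam) = Amat lam.
Proof.
apply/matrixP; apply: ord_inordP => p p9; apply: ord_inordP => q q9.
change (ent (ptrans (Amat lam)) p q = ent (Amat lam) p q).
rewrite ptransE //.
by case: p p9 => [|[|[|[|[|[|[|[|[|p]]]]]]]]] // _;
   case: q q9 => [|[|[|[|[|[|[|[|[|q]]]]]]]]] // _; rewrite /= !Amat_ent.
Qed.

Definition Uent (p i : nat) : C :=
  match i, p with
  | 0, 0 | 0, 4 | 0, 8 => 1
  | 1, 1 | 2, 6 | 3, 5 => lam
  | 1, 3 | 2, 2 | 3, 7 => lam^-1
  | _, _ => 0
  end.

Definition Umat : 'M[C]_(9, 4) := \matrix_(p, i) Uent p i.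

Lemma Amat_gram : Amat lam = Umat *m adjmx Umat.
Proof.
have lam0 := lam_neq0.
apply/matrixP; apply: ord_inordP => p p9; apply: ord_inordP => q q9.
rewrite !mxE sum_ord4 !mxE !inordK //.
case: p p9 => [|[|[|[|[|[|[|[|[|p]]]]]]]]] // _;
 case: q q9 => [|[|[|[|[|[|[|[|[|q]]]]]]]]] // _;
 rewrite /= ?conjC0 ?conjC1 ?conj_lam ?conj_lamV; first [done | by field].
Qed.

Lemma Amat_psd : psdmx (Amat lam).
Proof. by rewrite Amat_gram; apply: psd_gram. Qed.

Lemma Amat_inT : inT (Amat lam).
Proof. by split; rewrite ?ptrans_Amat; apply: Amat_psd. Qed.

Section KernelRelations.
Variable M : 'M[C]_9.
Hypothesis M_kerA : forall j, (j < 5)%N -> M *m kerA j = 0.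

Lemma kerA_rel j p : (j < 5)%N ->
  \sum_(q < 9) M (inord p) q * kerAent j q = 0.
Proof.
move=> j5; move/matrixP: (M_kerA j5) => /(_ (inord p) 0).
by rewrite !mxE => Mk0; rewrite -[RHS]Mk0; apply: eq_bigr => q _; rewrite mxE.
Qed.

Ltac kerA_col j p :=
  let e := fresh "row_rel" in
  have e := kerA_rel p (j := j) isT;
  rewrite sum_ord9 /= !inordK // in e;
  apply/eqP; rewrite -subr_eq0 -e /ent; apply/eqP; ring.

Lemma kerA_col04 p : ent M p 0 = ent M p 4. Proof. kerA_col 0%N p. Qed.
Lemma kerA_col48 p : ent M p 4 = ent M p 8. Proof. kerA_col 1%N p. Qed.
Lemma kerA_col13 p : ent M p 1 = L * ent M p 3. Proof. kerA_col 2%N p. Qed.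
Lemma kerA_col62 p : ent M p 6 = L * ent M p 2. Proof. kerA_col 3%N p. Qed.
Lemma kerA_col57 p : ent M p 5 = L * ent M p 7. Proof. kerA_col 4%N p. Qed.

End KernelRelations.

(* Rows and columns 4, 8 of a Hermitian B with ker A <= ker B copy those of
   index 0, and those of index 1, 6, 5 are L times those of index 3, 2, 7. *)
Definition rep_index (p : nat) : nat :=
  match p with 0 | 4 | 8 => 0 | 1 | 3 => 3 | 2 | 6 => 2 | _ => 7 end.
Definition rep_weight (p : nat) : C := match p with 1 | 5 | 6 => L | _ => 1 end.
Definition diag_weight (r : nat) : C := if r == 0%N then 1 else lam^-1 ^+ 2.

Lemma rep_index_mem p : rep_index p \in [:: 0; 3; 2; 7]%N.
Proof. by case: p => [|[|[|[|[|[|[|[|[|p]]]]]]]]]. Qed.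

Lemma L_neq0 : L != 0. Proof. by rewrite expf_neq0 ?lam_neq0. Qed.

Lemma mulL_eq0 x : L * x = 0 -> x = 0.
Proof. by move/eqP; rewrite mulf_eq0 (negPf L_neq0) => /eqP. Qed.

Lemma mulVL x : lam^-1 ^+ 2 * (L * x) = x.
Proof. by rewrite mulrA -exprMn mulVf ?lam_neq0 // expr1n mul1r. Qed.

Section Extremality.
Variable B : 'M[C]_9.
Hypothesis B_herm : adjmx B = B.
Hypothesis B_kerA : forall j, (j < 5)%N -> B *m kerA j = 0.
Hypothesis Bt_kerA : forall j, (j < 5)%N -> ptrans B *m kerA j = 0.

Lemma entB_conj p q : ent B q p = (ent B p q)^*.
Proof. exact: hermitian_entry. Qed.

Lemma entB_conj_eq0 p q : ent B p q = 0 -> ent B q p = 0.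
Proof. by rewrite (entB_conj p q) => ->; rewrite conjC0. Qed.

Lemma kerA_row04 q : ent B 0 q = ent B 4 q.
Proof. by rewrite (entB_conj q 0) (entB_conj q 4) (kerA_col04 B_kerA). Qed.
Lemma kerA_row48 q : ent B 4 q = ent B 8 q.
Proof. by rewrite (entB_conj q 4) (entB_conj q 8) (kerA_col48 B_kerA). Qed.
Lemma kerA_row13 q : ent B 1 q = L * ent B 3 q.
Proof. by rewrite (entB_conj q 1) (entB_conj q 3) (kerA_col13 B_kerA) rmorphM /= conj_L. Qed.
Lemma kerA_row62 q : ent B 6 q = L * ent B 2 q.
Proof. by rewrite (entB_conj q 6) (entB_conj q 2) (kerA_col62 B_kerA) rmorphM /= conj_L. Qed.
Lemma kerA_row57 q : ent B 5 q = L * ent B 7 q.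
Proof. by rewrite (entB_conj q 5) (entB_conj q 7) (kerA_col57 B_kerA) rmorphM /= conj_L. Qed.

Lemma entB_reduce p q : (p < 9)%N -> (q < 9)%N ->
  ent B p q = rep_weight p * rep_weight q * ent B (rep_index p) (rep_index q).
Proof.
have reduce_row p' q' : (p' < 9)%N -> ent B p' q' = rep_weight p' * ent B (rep_index p') q'.
  by case: p' => [|[|[|[|[|[|[|[|[|p']]]]]]]]] // _; rewrite /= ?mul1r
       ?kerA_row13 ?kerA_row62 ?kerA_row57 -?kerA_row48 -?kerA_row04.
have reduce_col p' q' : (q' < 9)%N -> ent B p' q' = rep_weight q' * ent B p' (rep_index q').
  by case: q' => [|[|[|[|[|[|[|[|[|q']]]]]]]]] // _; rewrite /= ?mul1r
       ?(kerA_col13 B_kerA) ?(kerA_col62 B_kerA) ?(kerA_col57 B_kerA)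
       -?(kerA_col48 B_kerA) -?(kerA_col04 B_kerA).
by move=> p9 q9; rewrite reduce_row // reduce_col // mulrA.
Qed.

Let b := ent B 0 0.

Lemma entB33 : ent B 3 3 = lam^-1 ^+ 2 * b.
Proof.
have := kerA_col04 Bt_kerA 0; rewrite !ptransE //= (kerA_col13 B_kerA).
by rewrite /b => ->; rewrite mulVL.
Qed.

Lemma entB22 : ent B 2 2 = lam^-1 ^+ 2 * b.
Proof.
have := kerA_col04 Bt_kerA 0; rewrite (kerA_col48 Bt_kerA) !ptransE //= kerA_row62.
by rewrite /b => ->; rewrite mulVL.
Qed.

Lemma entB77 : ent B 7 7 = lam^-1 ^+ 2 * b.
Proof.
have := kerA_col48 Bt_kerA 4; rewrite !ptransE //= (kerA_col57 B_kerA).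
rewrite -kerA_row04 -(kerA_col04 B_kerA).
by rewrite /b => ->; rewrite mulVL.
Qed.

Lemma entB02_eq0 : ent B 0 2 = 0 /\ ent B 3 7 = 0.
Proof.
have B20 : ent B 2 0 = L * (L * ent B 7 3).
  by have := kerA_col04 Bt_kerA 2; rewrite !ptransE //= kerA_row57 (kerA_col13 B_kerA).
have B37 : ent B 3 7 = L * ent B 0 2.
  by have := kerA_col04 Bt_kerA 6; rewrite !ptransE //= (kerA_col62 B_kerA) => ->.
have B02 : ent B 0 2 = 0.
  apply: L3_fixed_eq0.
  by rewrite {1}(entB_conj 2 0) B20 !rmorphM /= conj_lam -entB_conj B37 /L; ring.
by rewrite B37 B02 mulr0.
Qed.

Lemma entB23_eq0 : ent B 2 3 = 0 /\ ent B 7 0 = 0.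
Proof.
have B23 : ent B 2 3 = L * ent B 7 0.
  by have := kerA_col04 Bt_kerA 5; rewrite !ptransE //= kerA_row57 -(kerA_col04 B_kerA).
have B07 : ent B 0 7 = L * (L * ent B 3 2).
  have := kerA_col04 Bt_kerA 7; rewrite !ptransE //= kerA_row13 (kerA_col62 B_kerA).
  by rewrite -kerA_row04.
have B23_0 : ent B 2 3 = 0.
  apply: L3_fixed_eq0.
  by rewrite {1}B23 (entB_conj 0 7) B07 !rmorphM /= conj_lam -entB_conj /L; ring.
by split=> //; apply: mulL_eq0; rewrite -B23.
Qed.

Lemma entB03_eq0 : ent B 0 3 = 0 /\ ent B 2 7 = 0.
Proof.
have B72 : ent B 7 2 = L * ent B 3 0.
  have := kerA_col04 Bt_kerA 1; rewrite (kerA_col48 Bt_kerA) !ptransE //=.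
  by rewrite kerA_row13.
have B03 : ent B 0 3 = L * (L * ent B 2 7).
  have := kerA_col04 Bt_kerA 3; rewrite (kerA_col48 Bt_kerA) !ptransE //=.
  by rewrite kerA_row62 (kerA_col57 B_kerA).
have B03_0 : ent B 0 3 = 0.
  apply: L3_fixed_eq0.
  by rewrite {1}B03 (entB_conj 7 2) B72 !rmorphM /= conj_lam -entB_conj /L; ring.
by split=> //; apply: mulL_eq0; apply: mulL_eq0; rewrite -B03.
Qed.

Lemma entB_rep r s : r \in [:: 0; 3; 2; 7]%N -> s \in [:: 0; 3; 2; 7]%N ->
  ent B r s = (if r == s then diag_weight r else 0) * b.
Proof.
have [B02 B37] := entB02_eq0; have [B23 B70] := entB23_eq0.
have [B03 B27] := entB03_eq0.
rewrite !inE => /or4P[]/eqP-> /or4P[]/eqP->; rewrite /diag_weight /= ?mul0r ?mul1r //.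
all: by rewrite ?entB33 ?entB22 ?entB77 ?B02 ?B37 ?B23 ?B70 ?B03 ?B27
  ?(entB_conj_eq0 B02) ?(entB_conj_eq0 B37) ?(entB_conj_eq0 B23)
  ?(entB_conj_eq0 B70) ?(entB_conj_eq0 B03) ?(entB_conj_eq0 B27).
Qed.

Lemma entB_formula p q : (p < 9)%N -> (q < 9)%N ->
  ent B p q = rep_weight p * rep_weight q *
    (if rep_index p == rep_index q then diag_weight (rep_index p) else 0) * b.
Proof. by move=> p9 q9; rewrite entB_reduce // entB_rep ?rep_index_mem // mulrA. Qed.

End Extremality.

Lemma kerA_ptrans_scalar B : adjmx B = B ->
  (forall j, (j < 5)%N -> B *m kerA j = 0) ->
  (forall j, (j < 5)%N -> ptrans B *m kerA j = 0) ->
  B = ent B 0 0 *: Amat lam.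
Proof.
move=> B_herm B_kerA Bt_kerA.
have A_herm : adjmx (Amat lam) = Amat lam by case: Amat_psd.
have At_kerA j : (j < 5)%N -> ptrans (Amat lam) *m kerA j = 0.
  by rewrite ptrans_Amat; apply: Amat_kerA.
apply/matrixP; apply: ord_inordP => p p9; apply: ord_inordP => q q9.
rewrite mxE; change (ent B p q = ent B 0 0 * ent (Amat lam) p q).
rewrite (entB_formula B_herm B_kerA Bt_kerA) // (entB_formula A_herm Amat_kerA At_kerA) //.
by rewrite Amat_ent //= mulr1 mulrC.
Qed.

Lemma Amat_extreme_summand B D : inT B -> inT D -> Amat lam = B + D ->
  exists2 b : C, 0 <= b & B = b *: Amat lam.
Proof.
move=> [psdB psdBt] [psdD psdDt] AeqBD.
exists (ent B 0 0); first exact: psd_diag_ge0.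
apply: kerA_ptrans_scalar psdB.1 _ _ => j j5.
  by apply: (psd_kerDl psdB psdD); rewrite -AeqBD Amat_kerA.
by apply: (psd_kerDl psdBt psdDt); rewrite -ptransD -AeqBD ptrans_Amat Amat_kerA.
Qed.

Lemma minors_eq0 (a x y w : C) :
  L * x * (L * w) = y * a -> x * w = a * (L * y) ->
  a * a = y * (L * y) -> a * a = L * x * x -> a * a = L * w * w ->
  [/\ a = 0, x = 0, y = 0 & w = 0].
Proof.
move=> E1 E2 E3 E4 E5.
have ay0 : a * y = 0.
  apply: L3_fixed_eq0; rewrite [LHS]mulrC -E1.
  transitivity (L ^+ 2 * (x * w)); first by ring.
  by rewrite E2; ring.
have a0 : a = 0.
  have : a * a * a = L * y * (a * y) by rewrite E3; ring.
  by rewrite ay0 mulr0 => /eqP; rewrite !mulf_eq0 !orbb => /eqP.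
have sqL_eq0 u : L * u * u = 0 -> u = 0.
  by rewrite -mulrA => /mulL_eq0/eqP; rewrite mulf_eq0 orbb => /eqP.
move: E3 E4 E5; rewrite a0 mulr0 => E3 E4 E5.
split=> //; apply: sqL_eq0; [by rewrite -E4 | by rewrite (mulrC (L * y)) -E3 | by rewrite -E5].
Qed.

Definition kerA_coef j (z : 'M[C]_3) : C := (adjmx (kerA j) *m ztilde z) 0 0.

Lemma kerA_coefE j z : kerA_coef j z = \sum_(p < 9) (kerAent j p)^* * ztilde z p 0.
Proof. by rewrite /kerA_coef mxE; apply: eq_bigr => p _; rewrite !mxE. Qed.

Lemma kerA_coef_eq0 z : (forall j, (j < 5)%N -> kerA_coef j z = 0) ->
  [/\ ent z 0 0 = ent z 1 1, ent z 1 1 = ent z 2 2, ent z 0 1 = L * ent z 1 0,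
      ent z 2 0 = L * ent z 0 2 & ent z 1 2 = L * ent z 2 1].
Proof.
move=> z_orth.
move: (z_orth 0%N isT) (z_orth 1%N isT) (z_orth 2%N isT) (z_orth 3%N isT) (z_orth 4%N isT).
rewrite !kerA_coefE !sum_ord9 !ztilde_inord // !inordK //= !rmorphN /=.
rewrite ?conjC0 ?conjC1 ?conj_L => e0 e1 e2 e3 e4.
split; apply/eqP; rewrite -subr_eq0 /ent;
  [rewrite -e0 | rewrite -e1 | rewrite -e2 | rewrite -e3 | rewrite -e4]; apply/eqP; ring.
Qed.

Lemma rank1_kerA_orth_eq0 z : (\rank z <= 1)%N ->
  (forall j, (j < 5)%N -> kerA_coef j z = 0) -> z = 0.
Proof.
move=> rk_z /kerA_coef_eq0 [d01 d12 e01 e20 e12].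
have m1 : ent z 0 0 * ent z 1 1 = ent z 0 1 * ent z 1 0 := rank_le1_minor _ _ _ _ rk_z.
have m2 : ent z 1 1 * ent z 2 2 = ent z 1 2 * ent z 2 1 := rank_le1_minor _ _ _ _ rk_z.
have m3 : ent z 0 0 * ent z 2 2 = ent z 0 2 * ent z 2 0 := rank_le1_minor _ _ _ _ rk_z.
have m4 : ent z 0 1 * ent z 1 2 = ent z 0 2 * ent z 1 1 := rank_le1_minor _ _ _ _ rk_z.
have m5 : ent z 1 0 * ent z 2 1 = ent z 1 1 * ent z 2 0 := rank_le1_minor _ _ _ _ rk_z.
rewrite -d12 -d01 in m2 m3; rewrite -d01 in m1 m4 m5.
rewrite e01 e12 in m4; rewrite e20 in m3 m5; rewrite e01 in m1; rewrite e12 in m2.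
have [z00 z10 z02 z21] := minors_eq0 m4 m5 m3 m1 m2.
apply/matrixP; apply: ord_inordP => i i3; apply: ord_inordP => k k3.
rewrite mxE; change (ent z i k = 0).
case: i i3 => [|[|[|i]]] // _; case: k k3 => [|[|[|k]]] // _.
all: by rewrite ?e01 ?e20 ?e12 -?d12 -?d01 ?z00 ?z10 ?z02 ?z21 ?mulr0.
Qed.

Lemma Amat_notin_V1 : ~ inV1 (Amat lam).
Proof.
case=> N [c [z [c_ge0 [z_rk A_def]]]].
have term_eq0 t j : (j < 5)%N -> c t * qform (zzstar (z t)) (kerA j) = 0.
  move=> j5; have := qform_ker (Amat_kerA j5).
  rewrite A_def qform_sum => /psumr_eq0P -> // k _.
  by rewrite mulr_ge0 ?c_ge0 ?(psd_gram (ztilde (z k))).2.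
have term0 t : c t *: zzstar (z t) = 0.
  have [->|ct0] := eqVneq (c t) 0; first by rewrite scale0r.
  suff -> : z t = 0.
    rewrite /zzstar (_ : ztilde 0 = 0) ?mul0mx ?scaler0 //.
    by apply/matrixP => p q; rewrite !mxE.
  apply: rank1_kerA_orth_eq0 (z_rk t) _ => j j5; apply: qform_rank1_eq0.
  by move/eqP: (term_eq0 t j j5); rewrite mulf_eq0 (negPf ct0) => /eqP.
have A0 : Amat lam = 0 by rewrite A_def; apply: big1 => t _; exact: term0.
by have := @Amat_ent 0 0 isT isT; rewrite /ent A0 mxE /= => /eqP; rewrite eq_sym oner_eq0.
Qed.
End AmatLambda.

Theorem mainTheorem2 (C : numClosedFieldType) (lam : C) :
  lam \is Num.real -> 0 < lam -> lam != 1 ->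
  [/\ inT (Amat lam), ~ inV1 (Amat lam) &
      forall B D : 'M[C]_9, inT B -> inT D -> Amat lam = B + D ->
        (exists2 b : C, 0 <= b & B = b *: Amat lam) /\
        (exists2 d : C, 0 <= d & D = d *: Amat lam)].
Proof.
move=> lam_real lam_gt0 lam_neq1; split.
- exact: Amat_inT.
- exact: Amat_notin_V1.
- move=> B D inT_B inT_D AeqBD; split; first exact: Amat_extreme_summand AeqBD.
  by rewrite addrC in AeqBD; exact: Amat_extreme_summand AeqBD.
Qed.
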